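(* Fix a positive integer $n$ and a nonzero $n$-partition $\lambda$ with $\lambda_n=0$. For every $n$-semistandard tableau $T$ of shape $\lambda$, $Y_\lambda(\pi_T)=S(T)$.
   Context: Identify $\lambda=(\lambda_1,\dots,\lambda_n)$ with its Young diagram; $c_j$ is the length of column $j$; $\zeta_1<\dots<\zeta_d$ are the distinct column lengths. For a permutation $\phi$ (one-line form), $Y_\lambda(\phi)$ is the tableau of shape $\lambda$ whose columns of length $\zeta_h$ contain $\phi_1,\dots,\phi_{\zeta_h}$ in increasing order ($1\le h\le d$). Write $(j,i)$ for the box in column $j$, row $i$. Reading order: $(l,k)\le(j,i)$ iff $l<j$, or $l=j$ and $k\ge i$; convention $(j,c_j+1)$ means $(j-1,1)$. An $n$-semistandard tableau $T$ of shape $\lambda$ has entries in $[n]$, weakly increasing along rows, strictly increasing down columns; $T(j,i)$ is its entry, $C_j$ its $j$-th column. Scanning tableau: the EWIS of a sequence $x_1,x_2,\dots$ is $x_{a_1},x_{a_2},\dots$ with $a_1=1$ and $a_b$ the smallest index $>a_{b-1}$ with $x_{a_b}\ge x_{a_{b-1}}$. For each column $j$ and $i=c_j,\dots,1$ in turn: delete the boxes of previously computed $P(T;j,k)$, $k>i$; form the sequence of entries in the lowest box of each of columns $j,\dots,\lambda_1$ of the current shape (skipping empty columns); $P(T;j,i)$ is the set of locations of the terms of its EWIS. $S(T)$ is the filling of $\lambda$ whose entry at $(j,i)$ is $T$ at the last location of $P(T;j,i)$. Greedy procedure: $\pi^{(1,1)}$ has first $c_1$ entries those of $C_1$ increasing,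 followed by the rest of $[n]$ increasing. For $(j,i)$ with $j\ge2$ in reading order from $(2,c_2)$ to $(\lambda_1,1)$, define $\pi^{(j,i)}$ from $\pi:=\pi^{(j,i+1)}$: if $T(j-1,i)=T(j,i)$ set $\pi^{(j,i)}=\pi$; otherwise let $i_0=i$, and given $i_{x-1}$ with $\pi_{i_{x-1}}<T(j,i)$ let $i_x$ be the smallest index $>c_j$ with $\pi_{i_{x-1}}<\pi_{i_x}\le T(j,i)$, stopping at $i_m$ with $\pi_{i_m}=T(j,i)$; set $\pi^{(j,i)}_{i_x}=\pi_{i_{x-1}}$ ($1\le x\le m$), $\pi^{(j,i)}_{i_0}=\pi_{i_m}$, others unchanged. $\pi_T:=\pi^{(\lambda_1,1)}$. *)

From mathcomp Require Import all_boot.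
Set Implicit Arguments. Unset Strict Implicit. Unset Printing Implicit Defensive.

(* Conventions:
   - a partition [lam] is a seq nat  [:: lam_1; ...; lam_n]  (1-indexed in the
     paper, nth 0 lam (k-1) here);
   - columns j and rows i are 1-indexed; a box is (j, i) = (column, row);
   - a filling/tableau of shape lam is a function  T : nat -> nat -> nat,
     T j i = entry in column j, row i (values off the shape are irrelevant);
   - a permutation in one-line form is a seq nat phi = [:: phi_1; ...; phi_n]. *)

Section Defs.
Variable lam : seq nat.

Definition ncols : nat := head 0 lam.

Definition collen (j : nat) : nat := count (fun x => j <= x) lam.

Definition in_shape (j i : nat) : Prop := 1 <= j /\ 1 <= i <= collen j.

Definition is_npartition (n : nat) : Prop :=
  size lam = n /\ sorted geq lam.

Definition semistandard (n : nat) (T : nat -> nat -> nat) : Prop :=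
  [/\ forall j i, in_shape j i -> 1 <= T j i <= n,
      forall j i, in_shape j i -> in_shape j.+1 i -> T j i <= T j.+1 i
    & forall j i, in_shape j i -> in_shape j i.+1 -> T j i < T j i.+1].

Definition pent (phi : seq nat) (k : nat) : nat := nth 0 phi k.-1.

Definition Ytab (phi : seq nat) (j i : nat) : nat :=
  nth 0 (sort leq (take (collen j) phi)) i.-1.

(* earliest weakly increasing subsequence of a sequence of located values:
   the first term, then repeatedly the first later term >= the last chosen. *)
Fixpoint ewis_aux (T : nat -> nat -> nat) (v : nat) (s : seq (nat * nat))
  : seq (nat * nat) :=
  match s with
  | [::] => [::]
  | x :: s' => if v <= T x.1 x.2 then x :: ewis_aux T (T x.1 x.2) s'
               else ewis_aux T v s'
  end.

Definition ewis (T : nat -> nat -> nat) (s : seq (nat * nat)) : seq (nat * nat) :=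
  match s with
  | [::] => [::]
  | x :: s' => x :: ewis_aux T (T x.1 x.2) s'
  end.

(* current shape given by column heights h; the sequence of lowest boxes of
   columns j, ..., lam_1, skipping empty columns *)
Definition lowest_boxes (h : nat -> nat) (j : nat) : seq (nat * nat) :=
  [seq (l, h l) | l <- iota j (ncols.+1 - j) & 0 < h l].

(* delete the boxes of P (each is the lowest box of its column) *)
Definition delete_boxes (h : nat -> nat) (P : seq (nat * nat)) : nat -> nat :=
  fun l => h l - (l \in map fst P).

(* the list [P(T;j,c_j); P(T;j,c_j - 1); ...] computed m steps from heights h *)
Fixpoint scan_steps (T : nat -> nat -> nat) (j : nat) (h : nat -> nat) (m : nat)
  : seq (seq (nat * nat)) :=
  match m with
  | 0 => [::]
  | m'.+1 => let P := ewis T (lowest_boxes h j) in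
             P :: scan_steps T j (delete_boxes h P) m'
  end.

Definition Pscan (T : nat -> nat -> nat) (j i : nat) : seq (nat * nat) :=
  nth [::] (scan_steps T j collen (collen j)) (collen j - i).

Definition Stab (T : nat -> nat -> nat) (j i : nat) : nat :=
  let b := last (0, 0) (Pscan T j i) in T b.1 b.2.

Definition pi_init (n : nat) (T : nat -> nat -> nat) : seq nat :=
  let C1 := [seq T 1 i | i <- iota 1 (collen 1)] in
  sort leq C1 ++ [seq k <- iota 1 n | k \notin C1].

(* the indices i_1, ..., i_m: i_x is the smallest index > cj with
   pi_{i_{x-1}} < pi_{i_x} <= t, stopping when pi_{i_m} = t.
   (fuel n suffices as values strictly increase; if no such index exists the
   chain is cut, a case that does not occur for semistandard T) *)
Fixpoint chain (fuel : nat) (n : nat) (pi : seq nat) (cj t cur : nat) : seq nat :=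
  match fuel with
  | 0 => [::]
  | fuel'.+1 =>
    if pent pi cur == t then [::] else
    match [seq k <- iota cj.+1 (n - cj) |
            (pent pi cur < pent pi k) && (pent pi k <= t)] with
    | k :: _ => k :: chain fuel' n pi cj t k
    | [::] => [::]
    end
  end.

Definition assign (pi : seq nat) (ks vs : seq nat) : seq nat :=
  foldl (fun p kv => set_nth 0 p kv.1.-1 kv.2) pi (zip ks vs).

Definition greedy_step (n : nat) (T : nat -> nat -> nat) (pi : seq nat)
  (ji : nat * nat) : seq nat :=
  let (j, i) := ji in
  if T j.-1 i == T j i then pi else
  let I := i :: chain n n pi (collen j) (T j i) i in
  (* new pi_{i_x} = pi_{i_{x-1}} (1 <= x <= m), new pi_{i_0} = pi_{i_m} *)
  assign pi I (rotr 1 [seq pent pi k | k <- I]).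

Definition reading_boxes : seq (nat * nat) :=
  flatten [seq [seq (j, i) | i <- rev (iota 1 (collen j))]
          | j <- iota 2 ncols.-1].

Definition pi_T (n : nat) (T : nat -> nat -> nat) : seq nat :=
  foldl (greedy_step n T) (pi_init n T) reading_boxes.

End Defs.

(* Induction on the number m of columns, comparing the greedy permutation pi
   with the scanning tableau of the shape cut down to its first m columns:
   once columns 1..m are treated, the first c_m entries of pi are column m
   of T and, for every k <= m, the first c_k entries of pi, sorted, form
   column k of that scanning tableau.  Adding column m + 1 changes each
   column of the scanning tableau by a bumping rule (merge_column).  On the
   permutation side the greedy step in box (m + 1, i) acts on every prefix
   of length at least c_(m+1) as an exchange: the largest value not
   exceeding T(m + 1, i), which is at least T(m, i), is replaced by
   T(m + 1, i).  Run bottom up over the column these exchanges perform the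
   same bumping, and since both sides are increasing they agree. *)

From mathcomp Require Import all_boot zify.
Set Implicit Arguments. Unset Strict Implicit. Unset Printing Implicit Defensive.

Section ScanningValues.
Variable T : nat -> nat -> nat.

Definition entry (b : nat * nat) : nat := T b.1 b.2.

Definition last_entry (P : seq (nat * nat)) : nat := entry (last (0, 0) P).

Lemma ewis_aux_rcons v s x :
  ewis_aux T v (rcons s x) =
  ewis_aux T v s ++
    (if last v (map entry (ewis_aux T v s)) <= entry x then [:: x] else [::]).
Proof.
elim: s v => [|y s IH] v /=; first by case: ifP.
by case: ifP => _ /=; rewrite IH.
Qed.

Lemma ewis_rcons a s x :
  ewis T (rcons (a :: s) x) =
  ewis T (a :: s) ++ (if last_entry (ewis T (a :: s)) <= entry x then [:: x] else [::]).
Proof.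
by rewrite rcons_cons /= ewis_aux_rcons /last_entry /entry /= (last_map entry).
Qed.

Lemma mem_ewis s : {subset ewis T s <= s}.
Proof.
have aux v s' : {subset ewis_aux T v s' <= s'}.
  elim: s' v => [|y s' IH] v //= x; case: ifP => _; rewrite !inE.
    by case/orP => [->|/IH ->]; rewrite ?orbT.
  by move/IH ->; rewrite orbT.
case: s => [|y s] //= x; rewrite !inE.
by case/orP => [->|/aux ->]; rewrite ?orbT.
Qed.

Definition lowest_boxes_upto (m : nat) (h : nat -> nat) (j : nat) : seq (nat * nat) :=
  [seq (l, h l) | l <- iota j (m.+1 - j) & 0 < h l].

Fixpoint scan_steps_upto (m j : nat) (h : nat -> nat) (s : nat) : seq (seq (nat * nat)) :=
  match s with
  | 0 => [::]
  | s'.+1 => let P := ewis T (lowest_boxes_upto m h j) in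
             P :: scan_steps_upto m j (delete_boxes h P) s'
  end.

Definition scan_values (m j : nat) (h : nat -> nat) (s : nat) : seq nat :=
  map last_entry (scan_steps_upto m j h s).

Lemma size_scan_values m j h s : size (scan_values m j h s) = s.
Proof. by elim: s h => [|s IH] h //=; rewrite IH. Qed.

Lemma lowest_boxes_upto_cons m h j : j <= m -> 0 < h j ->
  lowest_boxes_upto m h j = (j, h j) :: lowest_boxes_upto m h j.+1.
Proof. by move=> jm hj; rewrite /lowest_boxes_upto subSn //= hj subSS. Qed.

Lemma lowest_boxes_upto_rcons m h j : j <= m.+1 ->
  lowest_boxes_upto m.+1 h j =
  lowest_boxes_upto m h j ++ (if 0 < h m.+1 then [:: (m.+1, h m.+1)] else [::]).
Proof.
move=> jm; rewrite /lowest_boxes_upto subSn // -[(m.+1 - j).+1]addn1 iotaD.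
by rewrite filter_cat map_cat subnKC //=; case: (0 < h m.+1).
Qed.

Lemma mem_lowest_boxes_upto m h j b : b \in lowest_boxes_upto m h j -> j <= b.1 <= m.
Proof. by case/mapP => l; rewrite mem_filter mem_iota => /andP [_ Hl] -> /=; lia. Qed.

Lemma eq_lowest_boxes_upto m h1 h2 j : {in gtn m.+1, h1 =1 h2} ->
  lowest_boxes_upto m h1 j = lowest_boxes_upto m h2 j.
Proof.
move=> E; have inm l : l \in iota j (m.+1 - j) -> l \in gtn m.+1.
  by rewrite mem_iota inE; lia.
rewrite /lowest_boxes_upto (eq_in_filter (a2 := fun l => 0 < h2 l)); last first.
  by move=> l /inm /E ->.
by apply/eq_in_map => l; rewrite mem_filter => /andP [_ /inm /E ->].
Qed.

(* Effect of adding column [c] on a column [V] of the scanning tableau, read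
   bottom up: a value is replaced by the lowest unused entry of column [c]
   (of remaining height [h]) whenever it does not exceed that entry. *)
Fixpoint merge_column (c : nat) (V : seq nat) (h : nat) : seq nat :=
  match V with
  | [::] => [::]
  | x :: V' => if (0 < h) && (x <= T c h) then T c h :: merge_column c V' h.-1
               else x :: merge_column c V' h
  end.

Lemma ewis_upto_succ m h0 h1 j : j <= m -> 0 < h0 j -> {in gtn m.+1, h1 =1 h0} ->
  ewis T (lowest_boxes_upto m.+1 h1 j) =
  ewis T (lowest_boxes_upto m h0 j) ++
    (if (0 < h1 m.+1) && (last_entry (ewis T (lowest_boxes_upto m h0 j)) <= T m.+1 (h1 m.+1))
     then [:: (m.+1, h1 m.+1)] else [::]).
Proof.
move=> jm hj E; rewrite lowest_boxes_upto_rcons ?(leqW jm) // (eq_lowest_boxes_upto _ E).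
rewrite lowest_boxes_upto_cons //; case: (0 < h1 m.+1); last by rewrite !cats0.
by rewrite andTb cats1 ewis_rcons.
Qed.

Lemma scan_values_succ m j h0 h1 s : j <= m -> s <= h0 j -> {in gtn m.+1, h1 =1 h0} ->
  scan_values m.+1 j h1 s = merge_column m.+1 (scan_values m j h0 s) (h1 m.+1).
Proof.
elim: s h0 h1 => [|s IH] h0 h1 //= jm sh E.
have hj : 0 < h0 j by apply: leq_ltn_trans sh.
rewrite /scan_values /= -!/(scan_values _ _ _ _) (ewis_upto_succ jm hj E).
set P := ewis T _; set b := (_ && _).
have Pm x : x \in map fst P -> x <= m.
  by case/mapP => y /mem_ewis /mem_lowest_boxes_upto /andP [_ ?] ->.
have Pj : j \in map fst P.
  by rewrite /P lowest_boxes_upto_cons //= inE eqxx.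
have notPm : (m.+1 \in map fst P) = false.
  by apply/negbTE/negP => /Pm; rewrite ltnn.
rewrite (IH (delete_boxes h0 P)) //; first last.
- move=> l lm; have lm' : l != m.+1 by move: lm; rewrite inE; lia.
  rewrite /delete_boxes map_cat mem_cat E //.
  by case: b => /=; rewrite ?in_cons ?in_nil ?(negbTE lm') !orbF.
- by rewrite /delete_boxes Pj subn1 -ltnS prednK.
rewrite /delete_boxes map_cat mem_cat notPm /=.
case: b => /=; first by rewrite /last_entry last_cat /= inE eqxx subn1.
by rewrite cats0 subn0.
Qed.

Lemma scan_values_single j h s : s <= h j ->
  scan_values j j h s = [seq T j (h j - x) | x <- iota 0 s].
Proof.
elim: s h => [|s IH] h //= sh.
have hj : 0 < h j by apply: leq_ltn_trans sh.
rewrite /scan_values /= /lowest_boxes_upto subSnn /= hj /= -/(scan_values _ _ _ _).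
rewrite /last_entry /entry /= subn0; congr cons.
rewrite IH; last by rewrite /delete_boxes /= inE eqxx subn1 -ltnS prednK.
rewrite -[in RHS](addn0 1) iotaDl -map_comp; apply/eq_map => x /=.
by rewrite /delete_boxes /= inE eqxx subnDA.
Qed.

End ScanningValues.

Lemma gtn_trans : transitive gtn.
Proof. exact: rev_trans ltn_trans. Qed.

(* [A'] arises from [A] by replacing with [t] the largest element [u <= t] of [A],
   which is required to be at least [v]. *)
Definition exchange (A A' : nat -> bool) (v t : nat) : Prop :=
  exists u, [/\ A u, v <= u <= t, (forall y, A y -> u < y -> t < y)
              & forall x, A' x = (x == t) || (A x && (x != u))].

Fixpoint exchanges (A : nat -> bool) (l : seq (nat * nat)) (A' : nat -> bool) : Prop :=
  match l with
  | [::] => A' =1 A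
  | (v, t) :: l' => exists B, exchange A B v t /\ exchanges B l' A'
  end.

Lemma exchange_functional A1 A2 B1 B2 v t : A1 =1 A2 ->
  exchange A1 B1 v t -> exchange A2 B2 v t -> B1 =1 B2.
Proof.
move=> EA [u [Au /andP [vu ut] Hu EB]] [u' [Au' /andP [vu' ut'] Hu' EB']].
suff eu : u = u' by move=> x; rewrite EB EB' EA eu.
case: (ltngtP u u') => // lt_uu'.
- by have := Hu u'; rewrite EA Au' => /(_ isT lt_uu'); rewrite ltnNge ut'.
- by have := Hu' u; rewrite -EA Au => /(_ isT lt_uu'); rewrite ltnNge ut.
Qed.

Lemma exchanges_functional l A1 A2 B1 B2 : A1 =1 A2 ->
  exchanges A1 l B1 -> exchanges A2 l B2 -> B1 =1 B2.
Proof.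
elim: l A1 A2 => [|[v t] l IH] A1 A2 EA /=; first by move=> E1 E2 x; rewrite E1 E2 EA.
move=> [C1 [U1 H1]] [C2 [U2 H2]].
exact: IH (exchange_functional EA U1 U2) H1 H2.
Qed.

Lemma eq_exchange A A' B v t : A =1 A' -> exchange A B v t -> exchange A' B v t.
Proof.
move=> EA [u [Au vut Hu EB]]; exists u; split => //; first by rewrite -EA.
  by move=> y; rewrite -EA; apply: Hu.
by move=> x; rewrite EB EA.
Qed.

Lemma eq_exchanges l A A' B B' : A =1 A' -> B =1 B' -> exchanges A l B -> exchanges A' l B'.
Proof.
elim: l A A' => [|[v t] l IH] A A' EA EB /=; first by move=> E x; rewrite -EB E EA.
by move=> [C [U H]]; exists C; split; [apply: eq_exchange U | apply: IH H].
Qed.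

Lemma exchange_mem (A A' : nat -> bool) v t : A t -> exchange A A' v t -> A' =1 A.
Proof.
move=> At [u [Au /andP [_ ut] Hu E]] x.
have ut' : u = t by case: (ltngtP u t) ut => // ltut _; have := Hu t At ltut; rewrite ltnn.
by rewrite E ut'; case: eqP => [->|] //=; rewrite ?At ?andbT.
Qed.

Lemma exchange_id (A : nat -> bool) v t : A t -> v <= t -> exchange A A v t.
Proof.
move=> At vt; exists t; split; rewrite ?vt ?leqnn //.
by move=> x; case: eqP => [->|] //=; rewrite andbT.
Qed.

Section MergeColumn.
Variables (T : nat -> nat -> nat) (c : nat) (C : nat -> nat).

Definition column_exchanges (h : nat) : seq (nat * nat) :=
  [seq (C p, T c p) | p <- rev (iota 1 h)].

Lemma rev_iota1S h : rev (iota 1 h.+1) = h.+1 :: rev (iota 1 h).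
Proof. by rewrite -[h.+1]addn1 iotaD rev_cat /= addnC. Qed.

Lemma column_exchangesS h : column_exchanges h.+1 = (C h.+1, T c h.+1) :: column_exchanges h.
Proof. by rewrite /column_exchanges rev_iota1S. Qed.

Lemma merge_column0 V : merge_column T c V 0 = V.
Proof. by elim: V => [|x V IH] //=; rewrite IH. Qed.

Lemma exchange_merge_head (E V : seq nat) x v t :
  path gtn x V -> v <= x <= t -> (forall y, y \in E -> t < y) ->
  exchange (fun y => (y \in E) || (y \in x :: V)) (fun y => (y \in t :: E) || (y \in V)) v t.
Proof.
move=> SV vxt HE.
have Vx : forall y, y \in V -> y < x by apply/allP; apply: order_path_min gtn_trans SV.
have xt : x <= t by case/andP: vxt.
exists x; split => //; first by rewrite inE eqxx orbT.
- move=> y; rewrite inE => /orP [/HE //|/orP [/eqP ->|/Vx yx xy]]; first by rewrite ltnn.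
  by have := ltn_trans yx xy; rewrite ltnn.
- move=> y; rewrite !inE; case: (eqVneq y t) => //= yt.
  case: (eqVneq y x) => [->|yx]; rewrite ?andbF ?andbT //=.
  apply/negbTE; rewrite negb_or; apply/andP; split.
  + by apply/negP => /HE; rewrite ltnNge xt.
  + by apply/negP => /Vx; rewrite ltnn.
Qed.

(* [E] holds the values already produced, all above the rest of the column. *)
Lemma exchanges_merge_column V : forall h (E : seq nat) (A : nat -> bool),
  sorted gtn V ->
  (forall p, 0 < p <= h -> C p <= T c p) ->
  (forall p q, 0 < p -> p < q -> q <= h -> C p < C q /\ T c p < T c q) ->
  (forall p, 0 < p <= h -> C p \in V) ->
  (forall x, x \in E -> 0 < h -> T c h < x) ->
  (forall x, A x = (x \in E) || (x \in V)) ->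
  exchanges A (column_exchanges h) (fun x => (x \in E) || (x \in merge_column T c V h)).
Proof.
elim: V => [|x V IH] [|h] E A SV CT Cinc CV HE HA.
- by move=> y /=; rewrite HA.
- by have := CV h.+1; rewrite leqnn /= in_nil => /(_ isT).
- by move=> y /=; rewrite HA merge_column0.
have Vx : forall y, y \in V -> y < x by apply/allP; apply: order_path_min gtn_trans SV.
have SV' : sorted gtn V by apply: path_sorted SV.
have Cx : C h.+1 <= x.
  have := CV h.+1; rewrite leqnn inE => /(_ isT) /orP [/eqP -> //|/Vx /ltnW //].
rewrite column_exchangesS [merge_column _ _ _ _]/=; case: ifP => [/= Hx|Hx].
  exists (fun y => (y \in T c h.+1 :: E) || (y \in V)); split.
    apply: eq_exchange (exchange_merge_head SV _ _) => //; first by rewrite Cx Hx.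
    by move=> y /HE; apply.
  apply: eq_exchanges (IH h (T c h.+1 :: E) _ _ _ _ _ _ _) => //.
  - by move=> y /=; rewrite !inE; case: (y == _); case: (y \in E).
  - by move=> p /andP [p1 p2]; apply: CT; rewrite p1 (leq_trans p2).
  - by move=> p q p1 pq q2; apply: Cinc => //; apply: leqW.
  - move=> p /andP [p1 p2]; have := CV p; rewrite p1 (leq_trans p2) // inE => /(_ isT).
    case/orP => [/eqP Cpx|//].
    have [Cp _] := Cinc p h.+1 p1 (leq_ltn_trans p2 (ltnSn _)) (leqnn _).
    by have := leq_trans Cp Cx; rewrite Cpx ltnn.
  - move=> y; rewrite inE => /orP [/eqP -> h0|/HE yE h0].
      by have [_ ->] := Cinc h h.+1 h0 (ltnSn _) (leqnn _).
    by have [_ Th] := Cinc h h.+1 h0 (ltnSn _) (leqnn _); apply: ltn_trans Th (yE isT).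
rewrite -column_exchangesS.
apply: eq_exchanges (IH h.+1 (x :: E) _ _ _ _ _ _ _) => //.
- by move=> y /=; rewrite !inE; case: (y == _); case: (y \in E).
- move=> p /andP [p1 p2]; have := CV p; rewrite p1 p2 inE => /(_ isT) /orP [/eqP Cpx|//].
  have Tp : T c p <= T c h.+1.
    by case: (ltngtP p h.+1) p2 => // [ph _|-> //]; have [_ /ltnW] := Cinc p h.+1 p1 ph (leqnn _).
  by have := leq_trans (CT p _) Tp; rewrite p1 p2 Cpx Hx => /(_ isT).
- by move=> y; rewrite inE => /orP [/eqP -> _|/HE //]; rewrite ltnNge Hx.
- by move=> y; rewrite HA !inE; case: (y == x); case: (y \in E).
Qed.

End MergeColumn.

Lemma path_gtn_weaken a b s : a <= b -> path gtn a s -> path gtn b s.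
Proof. by case: s => [|x s] //= ab /andP [xa ->]; rewrite andbT (leq_trans xa ab). Qed.

Section MergeColumnSorted.
Variables (T : nat -> nat -> nat) (c : nat).

Lemma path_merge_column V h b :
  (forall p q, 0 < p -> p < q -> q <= h -> T c p < T c q) ->
  path gtn b V -> (0 < h -> T c h < b) -> path gtn b (merge_column T c V h).
Proof.
elim: V h b => [|x V IH] h b //= Tinc /andP [xb SV] hb.
case: ifP => [/andP [h0 xT]|xT] /=.
  rewrite hb // IH //.
  - by move=> p q p0 pq qh; apply: Tinc => //; apply: leq_trans qh (leq_pred _).
  - exact: path_gtn_weaken SV.
  - by move=> h1; apply: Tinc; rewrite ?prednK.
rewrite xb IH // => h0; rewrite ltnNge; apply/negP => Tx.
by move: xT; rewrite h0 Tx.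
Qed.

Lemma sorted_merge_column V h :
  (forall p q, 0 < p -> p < q -> q <= h -> T c p < T c q) ->
  sorted gtn V -> sorted gtn (merge_column T c V h).
Proof.
move=> Tinc; set b := (maxn (head 0 V) (T c h)).+1.
have SV : sorted gtn V -> path gtn b V.
  by case: V @b => [|x V] //= ->; rewrite andbT ltnS leq_maxl.
move=> /SV /(path_merge_column Tinc) /(_ (fun=> leq_maxr _ _)).
by case: (merge_column _ _ _ _) => //= y s /andP [].
Qed.

End MergeColumnSorted.

Lemma sort_leq_uniq_eq (s s' : seq nat) :
  uniq s -> sorted ltn s' -> s =i s' -> sort leq s = s'.
Proof.
move=> us ss' E; apply: (irr_sorted_eq ltn_trans ltnn) => //; last by move=> x; rewrite mem_sort.
by rewrite ltn_sorted_uniq_leq sort_uniq us (sort_sorted leq_total).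
Qed.

Lemma perm_iota_uniq (pi : seq nat) n : size pi = n -> pi =i iota 1 n -> uniq pi.
Proof. by move=> szpi Epi; rewrite (uniq_size_uniq (iota_uniq 1 n)) ?szpi ?size_iota. Qed.

Lemma mem_take_pent s l y : l <= size s ->
  reflect (exists2 q, 0 < q <= l & pent s q = y) (y \in take l s).
Proof.
move=> ls; apply: (iffP idP).
  move=> yl; have ys : y \in s by apply: mem_take yl.
  by exists (index y s).+1; rewrite /pent /= ?nth_index // -(in_take_leq _ ls).
move=> [q /andP [q0 ql] <-]; rewrite /pent -(nth_take _ (_ : q.-1 < l)) ?prednK //.
by apply: mem_nth; rewrite size_takel // prednK.
Qed.

Lemma pent_inj s q1 q2 : uniq s -> 0 < q1 <= size s -> 0 < q2 <= size s ->
  pent s q1 = pent s q2 -> q1 = q2.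
Proof.
move=> us /andP [q10 q1s] /andP [q20 q2s] /eqP; rewrite /pent nth_uniq ?prednK //.
by move=> /eqP E; rewrite -(prednK q10) -(prednK q20) E.
Qed.

Lemma assign_cons pi k I w W :
  assign pi (k :: I) (w :: W) = assign (set_nth 0 pi k.-1 w) I W.
Proof. by case: W. Qed.

Lemma size_assign I pi W : all (fun k => 0 < k <= size pi) I ->
  size (assign pi I W) = size pi.
Proof.
elim: I pi W => [|k I IH] pi [|w W] //= /andP [/andP [k0 ks] HI].
have E : size (set_nth 0 pi k.-1 w) = size pi.
  by rewrite size_set_nth; apply/maxn_idPr; rewrite prednK.
by rewrite assign_cons IH E.
Qed.

Lemma pent_assign_notin I pi W q : all (leq 1) I -> 0 < q -> q \notin I ->
  pent (assign pi I W) q = pent pi q.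
Proof.
elim: I pi W => [|k I IH] pi [|w W] //= /andP [k0 HI] q0.
rewrite inE negb_or => /andP [qk qI]; rewrite assign_cons IH // /pent nth_set_nth /=.
by case: eqP => // E; move: qk; rewrite -(prednK k0) -(prednK q0) E eqxx.
Qed.

Lemma pent_assign_nth I pi W x : uniq I -> all (leq 1) I -> size W = size I ->
  x < size I -> pent (assign pi I W) (nth 0 I x) = nth 0 W x.
Proof.
elim: I pi W x => [|k I IH] pi [|w W] x //= /andP [kI uI] /andP [k0 HI] [sW].
case: x => [_|x] /=; last by rewrite ltnS => Hx; rewrite assign_cons IH.
by rewrite assign_cons pent_assign_notin // /pent nth_set_nth /= eqxx.
Qed.

Definition rotate_along (pi I : seq nat) : seq nat :=
  assign pi I (rotr 1 [seq pent pi k | k <- I]).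

Section RotateAlong.
Variables (pi : seq nat) (i : nat) (ks : seq nat).
Hypothesis uniq_I : uniq (i :: ks).
Hypothesis pos_I : all (leq 1) (i :: ks).

Local Notation P := (pent pi).
Local Notation pi' := (rotate_along pi (i :: ks)).

Lemma rotr1_map_cons : rotr 1 [seq P k | k <- i :: ks] =
  last (P i) [seq P k | k <- ks] :: belast (P i) [seq P k | k <- ks].
Proof. by rewrite map_cons lastI rotr1_rcons. Qed.

Lemma size_rotr1_map : size (rotr 1 [seq P k | k <- i :: ks]) = size (i :: ks).
Proof. by rewrite size_rotr size_map. Qed.

Lemma pent_rotate_head : pent pi' i = last (P i) [seq P k | k <- ks].
Proof.
by rewrite /rotate_along (pent_assign_nth _ _ (x := 0)) // ?size_rotr1_map // rotr1_map_cons.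
Qed.

Lemma pent_rotate_behead x : x < size ks ->
  pent pi' (nth 0 ks x) = nth 0 [seq P k | k <- i :: ks] x.
Proof.
move=> xs; rewrite /rotate_along (pent_assign_nth _ _ (x := x.+1)) ?size_rotr1_map //.
by rewrite rotr1_map_cons map_cons [in RHS]lastI nth_rcons size_belast size_map xs.
Qed.

Lemma pent_rotate_notin q : 0 < q -> q \notin i :: ks -> pent pi' q = P q.
Proof. exact: pent_assign_notin. Qed.

Lemma size_rotate : all (fun k => 0 < k <= size pi) (i :: ks) -> size pi' = size pi.
Proof. exact: size_assign. Qed.

End RotateAlong.

Lemma filter_iota_head p a b k r : filter p (iota a b) = k :: r ->
  [/\ a <= k < a + b, p k & forall q, a <= q < k -> ~~ p q].
Proof.
elim: b a => [|b IH] a //=; case: ifP => pa.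
  case=> <- _; split => //; first by rewrite leqnn addnS ltnS leq_addr.
  by move=> q; case: ltngtP.
move=> /IH [/andP [ak kb] pk Hq]; split => //; first by rewrite (ltnW ak) addnS -addSn.
move=> q /andP [aq qk]; case: (eqVneq q a) => [->|qa]; first by rewrite pa.
by apply: Hq; rewrite qk andbT ltn_neqAle eq_sym qa.
Qed.

Section Chain.
Variables (n : nat) (pi : seq nat) (c t : nat).
Local Notation P := (pent pi).

(* [ks] is the list [i_1, ..., i_m] of the greedy procedure started at [cur = i_0]. *)
Fixpoint greedy_chain (cur : nat) (ks : seq nat) : Prop :=
  match ks with
  | [::] => P cur = t
  | k :: ks' => [/\ c < k <= n, P cur < P k <= t,
                  (forall q, c < q < k -> ~~ ((P cur < P q) && (P q <= t)))
                & greedy_chain k ks']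
  end.

Lemma chain_is_greedy_chain fuel cur : c <= n -> (exists2 q, c < q <= n & P q = t) ->
  P cur <= t -> t - P cur < fuel -> greedy_chain cur (chain fuel n pi c t cur).
Proof.
move=> cn [q /andP [cq qn] Pq]; elim: fuel cur => [|fuel IH] cur // Pcur Hf /=.
case: eqP => [//|Pcur_t].
set F := [seq k <- _ | _]; case E: F => [|k r].
  suff : q \in F by rewrite E.
  rewrite /F mem_filter mem_iota Pq leqnn cq andbT ltn_neqAle Pcur andbT addSn subnKC //.
  by rewrite ltnS qn !andbT; apply/eqP.
have [/andP [ck kn] /andP [Pk1 Pk2] Hmin] := filter_iota_head E.
split; first by move: kn; rewrite ck addSn subnKC.
- by rewrite Pk1.
- by move=> q' /andP [q1 q2]; apply: Hmin; rewrite q1 q2.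
- by apply: IH => //; lia.
Qed.

Lemma greedy_chain_range cur ks : greedy_chain cur ks -> all (fun k => c < k <= n) ks.
Proof. by elim: ks cur => [|k ks IH] cur //= [-> _ _ /IH]. Qed.

Lemma greedy_chain_values cur ks : greedy_chain cur ks -> sorted ltn [seq P k | k <- cur :: ks].
Proof. by elim: ks cur => [|k ks IH] cur //= [_ /andP [-> _] _ /IH]. Qed.

Lemma greedy_chain_last cur ks : greedy_chain cur ks -> last (P cur) [seq P k | k <- ks] = t.
Proof. by elim: ks cur => [|k ks IH] cur //= [_ _ _ /IH]. Qed.

Lemma greedy_chain_sorted cur ks : greedy_chain cur ks -> sorted ltn ks.
Proof.
elim: ks cur => [|k ks IH] cur //= [ck Pk Hmin Hch]; have S := IH _ Hch.
case: ks Hch S {IH} => [|k' ks] //= [/andP [ck' _] /andP [Pkk' Pk't] _ _] ->.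
rewrite andbT ltnNge; apply/negP => k'k.
case: (ltngtP k' k) k'k => // [k'k _|E _]; last by rewrite E ltnn in Pkk'.
have := Hmin k'; rewrite ck' k'k Pk't andbT => /(_ isT); case/andP: Pk => Pk _.
by rewrite (ltn_trans Pk Pkk').
Qed.

Lemma greedy_chain_min cur ks : greedy_chain cur ks -> forall x, x < size ks ->
  forall q, c < q < nth 0 ks x ->
  ~~ ((nth 0 [seq P k | k <- cur :: ks] x < P q) && (P q <= t)).
Proof. by elim: ks cur => [|k ks IH] cur //= [_ _ Hmin Hch] [|x] //= /IH; apply. Qed.

End Chain.

Section ChainPrefix.
Variables (n : nat) (pi : seq nat) (c i t l : nat) (ks : seq nat).
Local Notation P := (pent pi).
Local Notation U := [seq P k | k <- i :: ks].
Local Notation pi' := (rotate_along pi (i :: ks)).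
Local Notation r := (find (fun k => l < k) ks).
Local Notation u := (nth 0 U r).

Hypothesis size_pi : size pi = n.
Hypothesis uniq_pi : uniq pi.
Hypothesis i_range : 0 < i <= c.
Hypothesis l_range : c <= l <= n.
Hypothesis chain_ks : greedy_chain n pi c t i ks.
Hypothesis low_entries : forall q, 0 < q <= c -> q != i -> (P q < P i) || (t < P q).

Lemma chain_nth_range x : x < size ks -> c < nth 0 ks x <= n.
Proof. by move=> xs; apply: (allP (greedy_chain_range chain_ks)); rewrite mem_nth. Qed.

Lemma chain_uniq : uniq (i :: ks).
Proof.
rewrite /= (sorted_uniq ltn_trans ltnn (greedy_chain_sorted chain_ks)) andbT.
apply/negP => /(nthP 0) [x xs ix]; have := chain_nth_range xs.
by rewrite ix ltnNge; case/andP: i_range => _ ->.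
Qed.

Lemma chain_pos : all (fun k => 0 < k <= size pi) (i :: ks).
Proof.
rewrite /= size_pi; case/andP: i_range => -> ic; case/andP: l_range => cl ln.
rewrite (leq_trans ic (leq_trans cl ln)) /=.
apply/allP => k /(allP (greedy_chain_range chain_ks)) /andP [ck ->].
by rewrite andbT (leq_ltn_trans _ ck).
Qed.

Lemma chain_pos1 : all (leq 1) (i :: ks).
Proof. by apply/allP => k /(allP chain_pos) /andP []. Qed.

Lemma chain_values_incr x y : x < y <= size ks -> nth 0 U x < nth 0 U y.
Proof.
case/andP=> xy yk; apply: (sorted_ltn_nth ltn_trans 0 (greedy_chain_values chain_ks)) => //.
  by rewrite inE size_map (leq_ltn_trans (ltnW xy)).
by rewrite inE size_map ltnS.
Qed.

Lemma chain_values_last : nth 0 U (size ks) = t.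
Proof. by rewrite -(greedy_chain_last chain_ks) (last_nth 0) size_map. Qed.

Lemma chain_before_prefix_end x : x < size ks -> (nth 0 ks x <= l) = (x < r).
Proof.
move=> xs; apply/idP/idP => [kl|xr]; last first.
  by have := before_find 0 xr; rewrite /= => /negbT; rewrite -leqNgt.
rewrite ltnNge; apply/negP => rx.
have hs : has (fun k => l < k) ks by rewrite has_find (leq_ltn_trans rx xs).
have Sle : sorted leq ks := sub_sorted (fun a b => @ltnW a b) (greedy_chain_sorted chain_ks).
have rk : r \in [pred n | n < size ks] by rewrite inE (leq_ltn_trans rx xs).
have xk : x \in [pred n | n < size ks] by [].
have := leq_trans (nth_find 0 hs) (sorted_leq_nth leq_trans leqnn 0 Sle _ _ rk xk rx).
by rewrite ltnNge kl.
Qed.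

Lemma chain_nth_in_prefix x : x < r -> 0 < nth 0 ks x <= l.
Proof.
move=> xr; have xs : x < size ks by apply: leq_trans xr (find_size _ _).
rewrite chain_before_prefix_end // xr andbT.
by case/andP: (chain_nth_range xs) => /(leq_ltn_trans _) ->.
Qed.

Lemma chain_index_in_prefix x : x <= r -> 0 < nth 0 (i :: ks) x <= l.
Proof.
case: x => [|x] xr /=; last exact: chain_nth_in_prefix.
by case/andP: i_range => -> ic; case/andP: l_range => cl _; rewrite (leq_trans ic cl).
Qed.

Lemma l_le_size : l <= size pi.
Proof. by rewrite size_pi; case/andP: l_range. Qed.

Lemma l_le_size_rotate : l <= size pi'.
Proof. by rewrite size_rotate ?chain_pos // l_le_size. Qed.

Lemma prefix_end_lt : r < size (i :: ks).
Proof. exact: find_size. Qed.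

Lemma u_pent : u = P (nth 0 (i :: ks) r).
Proof. by rewrite (nth_map 0) // prefix_end_lt. Qed.

Lemma u_in_prefix : u \in take l pi.
Proof.
apply/(mem_take_pent _ l_le_size).
by exists (nth 0 (i :: ks) r); rewrite -?u_pent // chain_index_in_prefix.
Qed.

Lemma u_range : P i <= u <= t.
Proof.
have rk : r <= size ks := prefix_end_lt.
apply/andP; split.
  by case: (posnP r) => [-> //|r0]; apply/ltnW/(chain_values_incr (x := 0)); rewrite r0.
rewrite -chain_values_last; case: (ltngtP r (size ks)) rk => [rk _|//|-> //].
by apply/ltnW/chain_values_incr; rewrite rk leqnn.
Qed.

Lemma u_gap y : y \in take l pi -> u < y -> t < y.
Proof.
have /andP [Piu _] := u_range.
move=> /(mem_take_pent _ l_le_size) [q /andP [q0 ql] <-] uq.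
have [qc|cq] := leqP q c.
  have [qi|qi] := eqVneq q i; first by move: uq; rewrite qi ltnNge Piu.
  have := low_entries _ qi; rewrite q0 qc => /(_ isT) /orP [Pq|//].
  by move: (leq_ltn_trans Piu uq); rewrite ltnNge (ltnW Pq).
case: (ltngtP r (size ks)) (find_size (fun k => l < k) ks) => // [rk _|rk _]; last first.
  by move: uq; rewrite rk chain_values_last.
have lk : l < nth 0 ks r by rewrite ltnNge chain_before_prefix_end // ltnn.
have := greedy_chain_min chain_ks rk (q := q); rewrite cq (leq_ltn_trans ql lk) => /(_ isT).
by rewrite uq /= ltnNge.
Qed.

Lemma prefix_rotate_sub x : x \in take l pi' -> (x == t) || ((x \in take l pi) && (x != u)).
Proof.
move=> /(mem_take_pent _ l_le_size_rotate) [q /andP [q0 ql] <-].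
have [qI|qI] := boolP (q \in i :: ks); last first.
  rewrite pent_rotate_notin ?chain_uniq ?chain_pos1 //; apply/orP; right; apply/andP; split.
    by apply/(mem_take_pent _ l_le_size); exists q; rewrite ?q0.
  apply/eqP; rewrite u_pent => /(pent_inj uniq_pi) Eq; move: qI; rewrite Eq ?mem_nth //.
  - exact: prefix_end_lt.
  - by rewrite q0 (leq_trans ql l_le_size).
  - by apply: (allP chain_pos); rewrite mem_nth // prefix_end_lt.
rewrite -(nth_index 0 qI) in ql *; move: (index q _) (index_mem q (i :: ks)) ql => [|y].
  by rewrite qI pent_rotate_head ?chain_uniq ?chain_pos1 // (greedy_chain_last chain_ks) eqxx.
rewrite qI /= ltnS => ys kl; have yr : y < r by rewrite -chain_before_prefix_end.
rewrite pent_rotate_behead ?chain_uniq ?chain_pos1 //; apply/orP; right; apply/andP; split.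
  apply/(mem_take_pent _ l_le_size); exists (nth 0 (i :: ks) y).
    exact/chain_index_in_prefix/ltnW.
  by rewrite (nth_map 0) // ltnS ltnW.
by rewrite neq_ltn chain_values_incr // yr find_size.
Qed.

Lemma prefix_rotate_sup x : (x == t) || ((x \in take l pi) && (x != u)) -> x \in take l pi'.
Proof.
case/orP => [/eqP ->|/andP [xA xu]]; apply/(mem_take_pent _ l_le_size_rotate).
  exists i; first exact: (chain_index_in_prefix (x := 0)).
  by rewrite pent_rotate_head ?chain_uniq ?chain_pos1 // (greedy_chain_last chain_ks).
move: xA => /(mem_take_pent _ l_le_size) [q /andP [q0 ql] Pq].
have [qI|qI] := boolP (q \in i :: ks); last first.
  by exists q; rewrite ?q0 // pent_rotate_notin ?chain_uniq ?chain_pos1.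
set y := index q (i :: ks); have Iy : nth 0 (i :: ks) y = q by rewrite nth_index.
have xU : x = nth 0 [seq P k | k <- i :: ks] y by rewrite (nth_map 0) ?index_mem // Iy.
have yr : y < r.
  rewrite ltn_neqAle; apply/andP; split; first by apply: contra_neq xu => yr; rewrite xU yr.
  have yI : y < size (i :: ks) by rewrite index_mem.
  move: Iy ql yI; clear xU; case: y => [//|y] /= Iy; rewrite -Iy ltnS => kl ys.
  by rewrite chain_before_prefix_end in kl.
have ys : y < size ks by apply: leq_trans yr (find_size _ _).
exists (nth 0 ks y); first exact: chain_nth_in_prefix.
by rewrite pent_rotate_behead ?chain_uniq ?chain_pos1.
Qed.

(* On the first [l] positions the rotation trades the value [u] of the last
   chain position [i_r <= l] for [t]: the value [u] moves on to [i_(r+1) > l]. *)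
Lemma exchange_rotate : exchange (mem (take l pi)) (mem (take l pi')) (P i) t.
Proof.
exists u; split; [exact: u_in_prefix | exact: u_range | exact: u_gap |].
by move=> x; apply/idP/idP; [apply: prefix_rotate_sub | apply: prefix_rotate_sup].
Qed.

End ChainPrefix.

Section RowUpdate.
Variables (n : nat) (pi : seq nat) (c i t : nat).
Local Notation P := (pent pi).

Hypothesis size_pi : size pi = n.
Hypothesis perm_pi : pi =i iota 1 n.
Hypothesis i_range : 0 < i <= c.
Hypothesis c_le_n : c <= n.
Hypothesis Pi_le_t : P i <= t.
Hypothesis t_range : 0 < t <= n.
Hypothesis low_entries : forall q, 0 < q <= c -> q != i -> (P q < P i) || (t < P q).

Definition row_update : seq nat :=
  if P i == t then pi else rotate_along pi (i :: chain n n pi c t i).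

Lemma t_in_pi : t \in pi.
Proof. by rewrite perm_pi mem_iota addnC addn1 ltnS. Qed.

Lemma t_after_column : P i != t -> exists2 q, c < q <= n & P q = t.
Proof.
move=> Pit; have tn : index t pi < n by rewrite -size_pi index_mem t_in_pi.
have Pt : P (index t pi).+1 = t by rewrite /pent /= nth_index ?t_in_pi.
exists (index t pi).+1 => //; rewrite tn andbT ltnNge; apply/negP => tc.
have [ti|ti] := eqVneq (index t pi).+1 i; first by move: Pit; rewrite -ti Pt eqxx.
by have := low_entries _ ti; rewrite tc Pt ltnn orbF (ltnNge t) Pi_le_t => /(_ isT).
Qed.

Lemma chain_row : P i != t -> greedy_chain n pi c t i (chain n n pi c t i).
Proof.
move=> Pit; apply: chain_is_greedy_chain => //; first exact: t_after_column.
have : P i \in pi by apply: mem_nth; rewrite size_pi prednK; case/andP: i_range => // _ ic; lia.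
by rewrite perm_pi mem_iota; case/andP: t_range => _ tn; lia.
Qed.

Lemma row_update_spec :
  [/\ size row_update = n, pent row_update i = t,
      (forall q, 0 < q <= c -> q != i -> pent row_update q = P q)
    & forall l, c <= l <= n -> exchange (mem (take l pi)) (mem (take l row_update)) (P i) t].
Proof.
rewrite /row_update; have [Pit|Pit] := eqVneq (P i) t.
  split=> // l /andP [cl ln]; apply: exchange_id => //.
  apply/mem_take_pent; first by rewrite size_pi.
  by exists i => //; case/andP: i_range => -> ic; rewrite (leq_trans ic cl).
have ch := chain_row Pit; have ln : c <= n <= n by rewrite c_le_n leqnn.
have uI := chain_uniq i_range ch; have pI := chain_pos1 size_pi i_range ln ch.
split.
- by rewrite size_rotate // (chain_pos size_pi _ ln ch).
- by rewrite pent_rotate_head // (greedy_chain_last ch).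
- move=> q /andP [q0 qc] qi; rewrite pent_rotate_notin //.
  rewrite inE negb_or qi /=; apply/negP => /(allP (greedy_chain_range ch)).
  by rewrite ltnNge qc.
- move=> l lr; apply: (exchange_rotate size_pi _ i_range lr ch low_entries).
  exact: perm_iota_uniq size_pi perm_pi.
Qed.

End RowUpdate.

Section Greedy.
Variables (n : nat) (lam : seq nat) (T : nat -> nat -> nat).
Hypothesis lam_part : is_npartition lam n.
Hypothesis T_ss : semistandard lam n T.

Local Notation c := (collen lam).
Local Notation step := (greedy_step lam n T).

Lemma collen_anti j k : j <= k -> c k <= c j.
Proof. by move=> jk; apply: sub_count => x /= kx; apply: leq_trans kx. Qed.

Lemma collen_le_n j : c j <= n.
Proof. by case: lam_part => <- _; apply: count_size. Qed.

Lemma collen_gt0_ncols j : 0 < c j -> j <= ncols lam.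
Proof.
case: lam_part => _ S; rewrite /collen /ncols -has_count => /hasP [x xl jx].
case: lam S xl => [|y s] //= S; rewrite inE => /orP [/eqP <- //|xs].
apply: leq_trans jx _; have /allP := order_path_min (rev_trans leq_trans) S.
exact.
Qed.

Lemma T_range j i : 0 < j -> 0 < i <= c j -> 0 < T j i <= n.
Proof. by case: T_ss => H _ _ j0 ij; apply: H. Qed.

Lemma T_row j i : 0 < j -> 0 < i <= c j.+1 -> T j i <= T j.+1 i.
Proof.
case: T_ss => _ H _ j0 /andP [i0 ic]; apply: H; split => //; rewrite i0 //=.
exact: leq_trans ic (collen_anti (leqnSn _)).
Qed.

Lemma T_col j p q : 0 < j -> 0 < p -> p < q -> q <= c j -> T j p < T j q.
Proof.
case: T_ss => _ _ H j0 p0; elim: q => [|q IH] // pq qc; move: pq; rewrite ltnS => pq.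
have Tq : T j q < T j q.+1 by apply: H; split; rewrite // (leq_trans p0 pq) (ltnW qc).
have [-> //|pq'] := eqVneq p q.
by apply: ltn_trans (IH _ (ltnW qc)) Tq; rewrite ltn_neqAle pq' pq.
Qed.

Definition column (j k : nat) : seq nat := [seq T j q | q <- iota 1 k].

Lemma sorted_column j k : 0 < j -> k <= c j -> sorted ltn (column j k).
Proof.
move=> j0 kc; apply/(sortedP 0) => x; rewrite size_map size_iota => xk.
rewrite !(nth_map 0) ?size_iota ?(ltn_trans (ltnSn x)) // !nth_iota ?(ltn_trans (ltnSn x)) //.
by apply: T_col; rewrite ?add1n // (leq_trans xk kc).
Qed.

Lemma take_column j k pi : k <= size pi -> (forall q, 0 < q <= k -> pent pi q = T j q) ->
  take k pi = column j k.
Proof.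
move=> ks H; apply: (eq_from_nth (x0 := 0)); first by rewrite size_takel // size_map size_iota.
move=> x; rewrite size_takel // => xk.
by rewrite nth_take // (nth_map 0) ?size_iota // nth_iota // add1n -H.
Qed.

(* Column [k] of the scanning tableau of the shape cut down to its first [m] columns. *)
Definition scan_column (m k : nat) : seq nat := rev (scan_values T m k c (c k)).

Lemma scan_column_single m : scan_column m m = column m (c m).
Proof.
rewrite /scan_column scan_values_single //; apply: (eq_from_nth (x0 := 0)).
  by rewrite size_rev !size_map !size_iota.
move=> x; rewrite size_rev size_map size_iota => xc.
rewrite nth_rev ?size_map ?size_iota // (nth_map 0) ?size_iota; last by lia.
rewrite nth_iota; last by lia.
by rewrite (nth_map 0) ?size_iota // nth_iota //; congr (T m); lia.
Qed.

Lemma scan_column_succ m k : 0 < k <= m ->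
  scan_column m.+1 k = rev (merge_column T m.+1 (scan_values T m k c (c k)) (c m.+1)).
Proof. by case/andP=> _ km; rewrite /scan_column (scan_values_succ T (h0 := c) km). Qed.

(* Before the greedy step at [(m + 1, i + 1)]: rows [1..i] of [pi] still hold
   column [m], rows [i + 2..c_(m + 1)] already hold column [m + 1]. *)
Definition midway (m i : nat) (pi : seq nat) : Prop :=
  [/\ size pi = n, pi =i iota 1 n,
      (forall q, 0 < q <= i -> pent pi q = T m q)
    & forall q, i < q <= c m.+1 -> pent pi q = T m.+1 q].

Lemma greedy_step_midway m i pi : 0 < m -> i < c m.+1 -> midway m i.+1 pi ->
  midway m i (step pi (m.+1, i.+1)) /\ forall l, c m.+1 <= l <= n ->
    exchange (mem (take l pi)) (mem (take l (step pi (m.+1, i.+1)))) (T m i.+1) (T m.+1 i.+1).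
Proof.
move=> m0 ic [szpi Epi lo hi].
have cm : c m.+1 <= c m by apply: collen_anti.
have Pi : pent pi i.+1 = T m i.+1 by apply: lo; rewrite leqnn.
have i_range : 0 < i.+1 <= c m.+1 by [].
have Pit : pent pi i.+1 <= T m.+1 i.+1 by rewrite Pi; apply: T_row.
have t_range : 0 < T m.+1 i.+1 <= n by apply: T_range.
have low : forall q, 0 < q <= c m.+1 -> q != i.+1 ->
    (pent pi q < pent pi i.+1) || (T m.+1 i.+1 < pent pi q).
  move=> q /andP [q0 qc] qi; case: (ltngtP q i.+1) qi => // [qi|qi] _.
    by rewrite lo ?q0 ?(ltnW qi) // Pi T_col // (leq_trans ic cm).
  by rewrite hi ?qi // T_col ?orbT.
have [sz1 Pi1 Pq1 ex1] := row_update_spec szpi Epi i_range (collen_le_n _) Pit t_range low.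
have -> : step pi (m.+1, i.+1) = row_update n pi (c m.+1) i.+1 (T m.+1 i.+1).
  by rewrite /greedy_step /row_update /= -Pi.
rewrite -Pi; split => //; split => //.
- have := ex1 n; rewrite collen_le_n leqnn !take_oversize ?sz1 ?szpi // => /(_ isT) ex.
  have tpi : T m.+1 i.+1 \in pi by rewrite Epi mem_iota addnC addn1 ltnS.
  by move=> x; rewrite -Epi; exact: (exchange_mem tpi ex x).
- move=> q /andP [q0 qi]; rewrite Pq1 ?q0 ?(leq_trans qi (ltnW ic)) ?lo ?q0 ?(leqW qi) //.
  by rewrite neq_ltn ltnS qi.
- move=> q /andP [iq qc]; case: (eqVneq q i.+1) => [->|qi]; first by rewrite Pi1.
  by rewrite Pq1 ?qc ?(leq_ltn_trans _ iq) // hi // qc andbT ltn_neqAle eq_sym qi iq.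
Qed.

Lemma greedy_rows m i pi : 0 < m -> i <= c m.+1 -> midway m i pi ->
  midway m 0 (foldl step pi [seq (m.+1, p) | p <- rev (iota 1 i)]) /\
  forall l, c m.+1 <= l <= n ->
    exchanges (mem (take l pi)) (column_exchanges T m.+1 (T m) i)
      (mem (take l (foldl step pi [seq (m.+1, p) | p <- rev (iota 1 i)]))).
Proof.
move=> m0; elim: i pi => [|i IH] pi ic mid; first by split.
have [mid1 ex1] := greedy_step_midway m0 ic mid.
have [mid' ex'] := IH _ (ltnW ic) mid1.
rewrite rev_iota1S column_exchangesS /=; split => // l lr.
by exists (mem (take l (step pi (m.+1, i.+1)))); split; [apply: ex1 | apply: ex'].
Qed.

Definition greedy_column (pi : seq nat) (j : nat) : seq nat :=
  foldl step pi [seq (j, i) | i <- rev (iota 1 (c j))].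

Definition greedy_invariant (m : nat) (pi : seq nat) : Prop :=
  [/\ size pi = n, pi =i iota 1 n,
      (forall q, 0 < q <= c m -> pent pi q = T m q)
    & forall k, 0 < k <= m -> sort leq (take (c k) pi) = scan_column m k].

Lemma invariant_midway m pi : greedy_invariant m pi -> midway m (c m.+1) pi.
Proof.
case=> szpi Epi col _; split => // q /andP [q0 qc]; last by have := leq_trans q0 qc; rewrite ltnn.
by apply: col; rewrite q0 (leq_trans qc (collen_anti (leqnSn _))).
Qed.

Lemma sort_prefix_greedy_column m k pi : 0 < m -> 0 < k <= m -> greedy_invariant m pi ->
  sort leq (take (c k) (greedy_column pi m.+1)) = scan_column m.+1 k.
Proof.
move=> m0 /andP [k0 km] inv; have [szpi Epi col sorted_pi] := inv.
have [[szpi' Epi' _ _] ex] := greedy_rows m0 (leqnn _) (invariant_midway inv).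
have cm : c m.+1 <= c m by apply: collen_anti.
have ckm : c m.+1 <= c k by apply: collen_anti; apply: leqW.
set V := scan_values T m k c (c k).
have Vk : sort leq (take (c k) pi) = rev V by rewrite sorted_pi ?k0.
have memV x : (x \in take (c k) pi) = (x \in V) by rewrite -(mem_sort leq) Vk mem_rev.
have SV : sorted gtn V.
  rewrite -rev_sorted -Vk ltn_sorted_uniq_leq sort_uniq (sort_sorted leq_total) andbT.
  by rewrite take_uniq // (perm_iota_uniq szpi Epi).
have Tinc p q : 0 < p -> p < q -> q <= c m.+1 -> T m p < T m q /\ T m.+1 p < T m.+1 q.
  by move=> p0 pq qc; split; apply: T_col => //; apply: leq_trans qc cm.
have colV p : 0 < p <= c m.+1 -> T m p \in V.
  move=> /andP [p0 pc]; rewrite -memV -col ?p0 ?(leq_trans pc cm) //.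
  by apply/mem_take_pent; [rewrite szpi collen_le_n | exists p; rewrite ?p0 ?(leq_trans pc ckm)].
have noE x : x \in [::] -> 0 < c m.+1 -> T m.+1 (c m.+1) < x by [].
have merged := exchanges_merge_column SV (fun p => T_row m0) Tinc colV noE (fun x => memV x).
have E := exchanges_functional (fun x => erefl) (ex (c k) _) merged.
rewrite ckm collen_le_n in E; rewrite scan_column_succ ?k0 //.
apply: sort_leq_uniq_eq; first by rewrite take_uniq // (perm_iota_uniq szpi' Epi').
  rewrite rev_sorted; apply: sorted_merge_column => // p q p0 pq qc.
  by have [] := Tinc p q p0 pq qc.
by move=> x; rewrite mem_rev; exact: (E isT x).
Qed.

Lemma sort_column j : 0 < j -> sort leq (column j (c j)) = column j (c j).
Proof.
move=> j0; apply: sort_leq_uniq_eq => //; last exact: sorted_column.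
by have := sorted_column j0 (leqnn _); rewrite ltn_sorted_uniq_leq => /andP [].
Qed.

Lemma greedy_column_invariant m pi : 0 < m -> greedy_invariant m pi ->
  greedy_invariant m.+1 (greedy_column pi m.+1).
Proof.
move=> m0 inv; have [[szpi' Epi' _ col'] _] := greedy_rows m0 (leqnn _) (invariant_midway inv).
split => // k /andP [k0]; rewrite leq_eqVlt ltnS => /orP [/eqP ->|km].
  by rewrite scan_column_single (take_column (j := m.+1)) ?szpi' ?collen_le_n ?sort_column.
by apply: sort_prefix_greedy_column; rewrite ?k0.
Qed.

Lemma greedy_invariant_init : greedy_invariant 1 (pi_init lam n T).
Proof.
rewrite /pi_init -/(column 1 (c 1)) sort_column //; set C1 := column 1 (c 1).
have C1_sorted : sorted ltn C1 by apply: sorted_column.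
have C1_uniq : uniq C1 by move: C1_sorted; rewrite ltn_sorted_uniq_leq => /andP [].
have C1_iota x : x \in C1 -> x \in iota 1 n.
  case/mapP => q; rewrite mem_iota add1n ltnS => qc ->.
  by have := T_range (j := 1) isT qc; rewrite mem_iota add1n ltnS.
set F := [seq k <- iota 1 n | k \notin C1].
have Epi : C1 ++ F =i iota 1 n.
  by move=> x; rewrite mem_cat mem_filter; case: (boolP (x \in C1)) => [/C1_iota ->|].
have uniq_pi : uniq (C1 ++ F).
  rewrite cat_uniq C1_uniq filter_uniq ?iota_uniq // andbT.
  by apply/hasPn => x; rewrite mem_filter => /andP [].
have szC1 : size C1 = c 1 by rewrite size_map size_iota.
have szpi : size (C1 ++ F) = n.
  have := uniq_size_uniq (iota_uniq 1 n) (fun x => esym (Epi x)).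
  by rewrite uniq_pi size_iota => /esym /eqP.
split => //.
- move=> q /andP [q0 qc]; rewrite /pent nth_cat szC1 (_ : q.-1 < c 1) ?prednK //.
  by rewrite (nth_map 0) ?size_iota ?prednK // nth_iota ?prednK // add1n prednK.
- move=> k; rewrite -eqn_leq => /eqP <-.
  by rewrite scan_column_single (take_size_cat _ szC1) sort_column.
Qed.

Lemma greedy_invariant_iter m : 0 < m ->
  greedy_invariant m (foldl greedy_column (pi_init lam n T) (iota 2 m.-1)).
Proof.
elim: m => [|[|m] IH] // _; first exact: greedy_invariant_init.
rewrite -[m.+2.-1]addn1 iotaD foldl_cat /= add2n; apply: greedy_column_invariant => //.
exact: IH.
Qed.

End Greedy.

Lemma scan_steps_upto_ncols lam T j h s :
  scan_steps lam T j h s = scan_steps_upto T (ncols lam) j h s.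
Proof. by elim: s h => [|s IH] h //=; rewrite IH. Qed.

Lemma Stab_scan_column lam T j i : 0 < i <= collen lam j ->
  Stab lam T j i = nth 0 (scan_column lam T (ncols lam) j) i.-1.
Proof.
move=> /andP [i0 ic]; have sz := size_scan_values T (ncols lam) j (collen lam) (collen lam j).
rewrite /scan_column nth_rev sz ?prednK //.
rewrite /scan_values (nth_map [::]); last by move: sz; rewrite size_map => ->; lia.
by rewrite /Stab /Pscan scan_steps_upto_ncols.
Qed.

Lemma pi_T_greedy_columns lam n T :
  pi_T lam n T = foldl (greedy_column n lam T) (pi_init lam n T) (iota 2 (ncols lam).-1).
Proof.
rewrite /pi_T /reading_boxes; elim: (iota 2 _) (pi_init lam n T) => [|j s IH] pi //=.
by rewrite foldl_cat IH.
Qed.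

Unset Implicit Arguments.

Theorem corollary5p3 (n : nat) (lam : seq nat) (T : nat -> nat -> nat) :
  0 < n ->
  is_npartition lam n ->
  lam != nseq n 0 ->
  nth 0 lam n.-1 = 0 ->
  semistandard lam n T ->
  forall j i, in_shape lam j i ->
    Ytab lam (pi_T lam n T) j i = Stab lam T j i.
Proof.
move=> _ lam_part _ _ T_ss j i [j0 ij].
have cj0 : 0 < collen lam j by case/andP: ij => i0; apply: leq_trans.
have jL := collen_gt0_ncols lam_part cj0.
have [_ _ _ sorted_prefix] := greedy_invariant_iter lam_part T_ss (leq_trans j0 jL).
by rewrite Stab_scan_column // /Ytab pi_T_greedy_columns sorted_prefix ?j0.
Qed.
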